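(* Let $\mathcal{S}$ be an abstract numeration system and $Y\subseteq\mathbb{N}^{\mathbb{N}}$. Then $Y$ is weakly $\mathcal{S}$-codable if and only if $P_v(Y)$ is $\mathcal{S}$-recognizable for every finite word $v$ over $\mathbb{N}_{>0}$.
   Context: ANS: $\mathcal{S}=(L,\prec)$ with $L$ an infinite language over a finite alphabet $\Sigma$ and $\prec$ a total order on $L$ of order type $\omega$; $\mathrm{rep}(n)$ is the $n$-th word of $L$ (from $n=0$). For $(n_1,\dots,n_d)\in\mathbb{N}^d$, $\mathrm{rep}(n_1,\dots,n_d)$ is the word over $(\Sigma\cup\{\#\})^d$ obtained by left-padding each $\mathrm{rep}(n_i)$ with a new symbol $\#$ to the maximal length. $Z\subseteq\mathbb{N}^d$ is $\mathcal{S}$-recognizable if $\mathrm{rep}(Z)$ is regular. For $\mathbf{y}\in\mathbb{N}^{\mathbb{N}}$: $\sum\mathbf{y}=\sum_iy_i$; if $\sum\mathbf{y}=d<\infty$, $\nu(\mathbf{y})$ is the unique $(n_1,\dots,n_d)$ with $n_1\le\dots\le n_d$ and $y_j=|\{k:n_k=j\}|$ for all $j$. $Y$ is weakly $\mathcal{S}$-codable if for every $k$ the set $\{\nu(\mathbf{y}):\mathbf{y}\in Y,\sum\mathbf{y}\le k\}$ has $\mathcal{S}$-recognizable intersection with each $\mathbb{N}^i$. For $\mathbf{y}$ with finite support, $s(\mathbf{y})=(n_1,\dots,n_k)$ lists the support $\{n:y_n\ne0\}$ in increasing order, and $e(\mathbf{y})$ is the word obtained from $\mathbf{y}$ by erasing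 all $0$'s. For $v\in\mathbb{N}_{>0}^*$: $Q_v(Y)=\{\mathbf{y}\in Y:e(\mathbf{y})=v\}$ and $P_v(Y)=s(Q_v(Y))\subseteq\mathbb{N}^{|v|}$. *)

From mathcomp Require Import all_boot.
Set Implicit Arguments. Unset Strict Implicit. Unset Printing Implicit Defensive.

Record dfa (A : finType) := DFA {
  dfa_state : finType;
  dfa_start : dfa_state;
  dfa_final : pred dfa_state;
  dfa_trans : dfa_state -> A -> dfa_state }.

Definition dfa_accepts (A : finType) (M : dfa A) (w : seq A) : bool :=
  @dfa_final A M (foldl (@dfa_trans A M) (@dfa_start A M) w).

Definition regular (A : finType) (Lang : seq A -> Prop) : Prop :=
  exists M : dfa A, forall w, Lang w <-> dfa_accepts M w.

(* S = (L, prec): L an infinite language over Sigma, prec a total order on L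
   of order type omega.  [ans_rep n] is the n-th word of L (from n = 0); the
   axioms say that rep enumerates L and is an order isomorphism
   (N,<) -> (L,prec), which is exactly "L infinite and prec of type omega". *)
Record ANS (Sigma : finType) := MkANS {
  ans_L : seq Sigma -> Prop;
  ans_prec : seq Sigma -> seq Sigma -> Prop;
  ans_rep : nat -> seq Sigma;
  ans_rep_L : forall n, ans_L (ans_rep n);
  ans_L_rep : forall w, ans_L w -> exists n, ans_rep n = w;
  ans_rep_prec : forall n m, ans_prec (ans_rep n) (ans_rep m) <-> n < m }.

Section Padding.
Variables (Sigma : finType) (S : ANS Sigma).

(* letter j of the word w left-padded with # (= None) to length M *)
Definition pad_letter (M : nat) (w : seq Sigma) (j : nat) : option Sigma :=
  if j < M - size w then None else nth None (map Some w) (j - (M - size w)).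

Definition rep_tuple (d : nat) (t : d.-tuple nat) : seq {ffun 'I_d -> option Sigma} :=
  let M := \max_(i < d) size (@ans_rep Sigma S (tnth t i)) in
  [seq [ffun i => pad_letter M (@ans_rep Sigma S (tnth t i)) j] | j <- iota 0 M].

Definition recognizable (d : nat) (Z : d.-tuple nat -> Prop) : Prop :=
  regular (fun w => exists t, Z t /\ w = rep_tuple t).
End Padding.

Definition sum_le (y : nat -> nat) (k : nat) : Prop :=
  exists N, (forall i, N <= i -> y i = 0) /\ \sum_(i < N) y i <= k.

Definition is_nu (y : nat -> nat) (d : nat) (t : d.-tuple nat) : Prop :=
  sorted leq t /\ forall j, y j = count_mem j t.

Definition weakly_codable (Sigma : finType) (S : ANS Sigma)
    (Y : (nat -> nat) -> Prop) : Prop :=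
  forall k i, recognizable S (fun t : i.-tuple nat =>
    exists y, Y y /\ sum_le y k /\ is_nu y t).

Definition supp_below (y : nat -> nat) (N : nat) : Prop :=
  forall i, N <= i -> y i = 0.

(* s(y) and e(y), computed with a support bound N (independent of N) *)
Definition s_of (y : nat -> nat) (N : nat) : seq nat :=
  [seq i <- iota 0 N | y i != 0].
Definition e_of (y : nat -> nat) (N : nat) : seq nat :=
  [seq y i | i <- iota 0 N & y i != 0].

(* P_v(Y) = s(Q_v(Y)) subset of N^|v|, Q_v(Y) = {y in Y | e(y) = v} *)
Definition P_v (v : seq nat) (Y : (nat -> nat) -> Prop) : (size v).-tuple nat -> Prop :=
  fun t => exists y N, Y y /\ supp_below y N /\ e_of y N = v /\ s_of y N = val t.

From mathcomp Require Import all_boot zify.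
Set Implicit Arguments. Unset Strict Implicit. Unset Printing Implicit Defensive.

(* For a finitely supported y with support s = s(y) (increasing) and nonzero
   values v = e(y), the tuple nu(y) is [push v s]: s_j repeated v_j times.
   Writing i = sum v, the tuple push v s is s reindexed along the surjection
   [block_of] : 'I_i -> 'I_|v| sending a position to its block, and on the
   encodings rep(.) this reindexing is the injective letter-to-letter morphism
   [recolumn] that duplicates columns.
   - If the sets of nu(y) are recognizable, then rep(P_v(Y)) is the inverse
     image of rep(nu-set of length i) under [recolumn], intersected with the
     regular language "consecutive columns differ in some letter", which says
     that s is increasing (entries differ iff their padded columns differ).
   - Conversely the nu-set of length i is empty above the sum bound k, and
     otherwise it is the finite union over the compositions v of i of the
     images of rep(P_v(Y)) under the corresponding [recolumn] morphisms. *)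

Section RegularClosure.
Variable A : finType.

Lemma regular_ext (L1 L2 : seq A -> Prop) :
  (forall w, L1 w <-> L2 w) -> regular L1 -> regular L2.
Proof. by move=> E [M HM]; exists M => w; rewrite -E. Qed.

Lemma regular_empty : regular (fun _ : seq A => False).
Proof. by exists (@DFA A unit tt (fun _ => false) (fun q _ => q)). Qed.

Lemma foldl_pair (S1 S2 : Type) (t1 : S1 -> A -> S1) (t2 : S2 -> A -> S2) w q1 q2 :
  foldl (fun q a => (t1 q.1 a, t2 q.2 a)) (q1, q2) w = (foldl t1 q1 w, foldl t2 q2 w).
Proof. by elim: w q1 q2 => //= a w IH q1 q2; rewrite IH. Qed.

Definition dfa_product (M1 M2 : dfa A) (op : bool -> bool -> bool) : dfa A :=
  @DFA A (dfa_state M1 * dfa_state M2)%type (dfa_start M1, dfa_start M2)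
    (fun q => op (dfa_final q.1) (dfa_final q.2))
    (fun q a => (dfa_trans q.1 a, dfa_trans q.2 a)).

Lemma dfa_productE (M1 M2 : dfa A) op w :
  dfa_accepts (dfa_product M1 M2 op) w = op (dfa_accepts M1 w) (dfa_accepts M2 w).
Proof. by rewrite /dfa_accepts /= foldl_pair. Qed.

Lemma regular_union (L1 L2 : seq A -> Prop) :
  regular L1 -> regular L2 -> regular (fun w => L1 w \/ L2 w).
Proof.
move=> [M1 H1] [M2 H2]; exists (dfa_product M1 M2 orb) => w.
by rewrite dfa_productE H1 H2; split => [[]->|/orP[]]; rewrite ?orbT; auto.
Qed.

Lemma regular_inter (L1 L2 : seq A -> Prop) :
  regular L1 -> regular L2 -> regular (fun w => L1 w /\ L2 w).
Proof.
move=> [M1 H1] [M2 H2]; exists (dfa_product M1 M2 andb) => w.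
by rewrite dfa_productE H1 H2; split => [[-> ->]|/andP].
Qed.

Lemma regular_bigunion (T : eqType) (vs : seq T) (L : T -> seq A -> Prop) :
  (forall v, v \in vs -> regular (L v)) ->
  regular (fun w => exists v, v \in vs /\ L v w).
Proof.
elim: vs => [|v vs IH] H.
  by apply: regular_ext regular_empty => w; split => // [[v []]].
have Hv := H v (mem_head _ _).
have Hvs : regular (fun w => exists u, u \in vs /\ L u w).
  by apply: IH => u uvs; apply: H; rewrite inE uvs orbT.
apply: regular_ext (regular_union Hv Hvs) => w; split.
- by move=> [Lw|[u [uvs Lw]]]; [exists v; rewrite mem_head | exists u; rewrite inE uvs orbT].
- by move=> [u []]; rewrite inE => /orP[/eqP->|uvs] Lw; [left|right; exists u].
Qed.

Lemma regular_letter_set (Q : pred {set A}) :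
  regular (fun w => Q [set a | a \in w]).
Proof.
exists (@DFA A {set A} set0 Q (fun X a => a |: X)) => w; rewrite /dfa_accepts /=.
suff -> : forall X, foldl (fun X a => a |: X) X w = X :|: [set a | a \in w].
  by rewrite set0U.
elim: w => [|a w IH] X /=; first by apply/setP => x; rewrite !inE orbF.
by rewrite IH; apply/setP => x; rewrite !inE; case: (x == a); rewrite ?orbT.
Qed.
End RegularClosure.

Section LetterMorphism.
Variables (A B : finType) (h : A -> B).

Lemma regular_preim (L : seq B -> Prop) :
  regular L -> regular (fun w => L (map h w)).
Proof.
move=> [M H]; exists (@DFA A (dfa_state M) (dfa_start M) (@dfa_final _ M)
  (fun q a => dfa_trans q (h a))) => w.
rewrite H /dfa_accepts /=; suff -> : forall q, foldl (dfa_trans (d:=M)) q (map h w) =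
  foldl (fun q a => dfa_trans q (h a)) q w by [].
by elim: w => //= a w IH q; rewrite IH.
Qed.

Variable M : dfa A.

Definition image_trans (o : option (dfa_state M)) (b : B) : option (dfa_state M) :=
  if o is Some q then
    if [pick a | h a == b] is Some a then Some (dfa_trans q a) else None
  else None.

Lemma image_trans_None w : foldl image_trans None w = None.
Proof. by elim: w. Qed.

Hypothesis h_inj : injective h.

Lemma image_trans_map q u :
  foldl image_trans (Some q) (map h u) = Some (foldl (dfa_trans (d:=M)) q u).
Proof.
elim: u q => //= a u IH q; rewrite {1}/image_trans.
case: pickP => [a' /eqP /h_inj -> | /(_ a)]; [exact: IH | by rewrite eqxx].
Qed.

Lemma image_trans_inv q w q' : foldl image_trans (Some q) w = Some q' ->
  exists u, w = map h u /\ q' = foldl (dfa_trans (d:=M)) q u.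
Proof.
elim: w q => [|b w IH] q /=; first by move=> [<-]; exists [::].
rewrite {1}/image_trans; case: pickP => [a /eqP <- | _]; last by rewrite image_trans_None.
by move=> /IH [u [-> ->]]; exists (a :: u).
Qed.
End LetterMorphism.

Lemma regular_image (A B : finType) (h : A -> B) (L : seq A -> Prop) :
  injective h -> regular L -> regular (fun w => exists u, L u /\ w = map h u).
Proof.
move=> h_inj [M H].
exists (@DFA B (option (dfa_state M)) (Some (dfa_start M))
  (fun o => if o is Some q then dfa_final q else false) (@image_trans A B h M)) => w.
rewrite /dfa_accepts /=; split.
- by move=> [u [/H Hu ->]]; rewrite image_trans_map.
- case E: (foldl _ _ w) => [q|//] Hq.
  have [u [-> Eq]] := image_trans_inv E; exists u; split => //.
  by apply/H; rewrite /dfa_accepts -Eq.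
Qed.

Definition reindex i m (s : m.-tuple nat) (f : 'I_i -> 'I_m) : i.-tuple nat :=
  [tuple tnth s (f k) | k < i].

Section Columns.
Variables (Sigma : finType) (S : ANS Sigma).
Notation rep := (@ans_rep Sigma S).

(* rep is an order isomorphism onto L, hence injective. *)
Lemma rep_inj : injective rep.
Proof.
have irr k : ~ ans_prec S (rep k) (rep k) by move/ans_rep_prec; rewrite ltnn.
move=> n m E; case: (ltngtP n m) => // lt.
- by have := proj2 (ans_rep_prec S n m) lt; rewrite E => /irr.
- by have := proj2 (ans_rep_prec S m n) lt; rewrite E => /irr.
Qed.

Definition maxlen d (t : d.-tuple nat) : nat := \max_(i < d) size (rep (tnth t i)).

Lemma size_le_maxlen d (t : d.-tuple nat) x : size (rep (tnth t x)) <= maxlen t.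
Proof. exact: (leq_bigmax (F := fun i => size (rep (tnth t i)))). Qed.

Lemma pad_letterE M (u : seq Sigma) j :
  pad_letter M u j = nth None (nseq (M - size u) None ++ map Some u) j.
Proof. by rewrite /pad_letter nth_cat size_nseq nth_nseq; case: ifP. Qed.

Lemma map_pad_letter M (u : seq Sigma) : size u <= M ->
  map (pad_letter M u) (iota 0 M) = nseq (M - size u) None ++ map Some u.
Proof.
move=> uM; rewrite (eq_map (pad_letterE M u)).
set p := _ ++ _; have Ep : size p = M by rewrite size_cat size_nseq size_map subnK.
by rewrite -[in iota _ M]Ep; exact: mkseq_nth.
Qed.

Notation column x := (map (fun a : {ffun 'I__ -> option Sigma} => a x)).

Lemma column_rep_tuple d (t : d.-tuple nat) (x : 'I_d) :
  column x (rep_tuple S t) =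
  nseq (maxlen t - size (rep (tnth t x))) None ++ map Some (rep (tnth t x)).
Proof.
rewrite /rep_tuple -map_comp -map_pad_letter ?size_le_maxlen //.
by apply/eq_map => j /=; rewrite ffunE.
Qed.

Lemma column_eqE d (t : d.-tuple nat) (x y : 'I_d) :
  (column x (rep_tuple S t) == column y (rep_tuple S t)) = (tnth t x == tnth t y).
Proof.
have unpad n (u : seq Sigma) : pmap id (nseq n None ++ map Some u) = u.
  by elim: n => [|n IH] //=; elim: u => //= a u ->.
apply/eqP/eqP => [|Exy]; rewrite !column_rep_tuple ?Exy //.
by move/(congr1 (pmap id)); rewrite !unpad => /rep_inj.
Qed.

Lemma entries_neqP d (t : d.-tuple nat) (x y : 'I_d) :
  reflect (exists2 a, a \in rep_tuple S t & a x != a y) (tnth t x != tnth t y).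
Proof.
have columns_neq (w : seq {ffun 'I_d -> option Sigma}) :
    has (fun a : {ffun _ -> _} => a x != a y) w = (column x w != column y w).
  by elim: w => //= a w ->; rewrite eqseq_cons; case: eqP.
by rewrite -column_eqE -columns_neq; apply: hasP.
Qed.

Definition recolumn i m (f : 'I_i -> 'I_m) (a : {ffun 'I_m -> option Sigma}) :
  {ffun 'I_i -> option Sigma} := [ffun k => a (f k)].

(* For f surjective, rep(s_(f 0), ..., s_(f (i-1))) is rep(s) with its columns
   rearranged by f: the padding length is unchanged since f hits every column. *)
Lemma rep_tuple_reindex i m (f : 'I_i -> 'I_m) (s : m.-tuple nat) :
  (forall j, exists k, f k = j) ->
  rep_tuple S (reindex s f) = map (recolumn f) (rep_tuple S s).
Proof.
move=> f_surj; have Emax : maxlen (reindex s f) = maxlen s.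
  apply/eqP; rewrite eqn_leq; apply/andP; split; apply/bigmax_leqP => j _.
  - by rewrite tnth_mktuple; exact: size_le_maxlen.
  - have [k <-] := f_surj j.
    by have := size_le_maxlen (reindex s f) k; rewrite tnth_mktuple.
rewrite /rep_tuple -/(maxlen (reindex s f)) -/(maxlen s) Emax -map_comp.
by apply/eq_map => j /=; apply/ffunP => k; rewrite !ffunE tnth_mktuple.
Qed.

Lemma recolumn_inj i m (f : 'I_i -> 'I_m) (g : 'I_m -> 'I_i) :
  cancel g f -> injective (recolumn f).
Proof.
move=> fg a b E; apply/ffunP => j; rewrite -[j]fg.
by have := congr1 (fun c : {ffun 'I_i -> option Sigma} => c (g j)) E; rewrite !ffunE.
Qed.

Lemma rep_tuple_recolumn_inv i m (f : 'I_i -> 'I_m) (g : 'I_m -> 'I_i)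
    (w : seq {ffun 'I_m -> option Sigma}) (t : i.-tuple nat) :
  cancel g f -> map (recolumn f) w = rep_tuple S t ->
  exists s : m.-tuple nat, w = rep_tuple S s /\ t = reindex s f.
Proof.
move=> fg Ew; pose s := [tuple tnth t (g j) | j < m]; exists s.
have f_surj j : exists k, f k = j by exists (g j).
have Et : t = reindex s f.
  apply: eq_from_tnth => k; rewrite !tnth_mktuple; apply/eqP.
  rewrite -column_eqE -Ew -!map_comp; apply/eqP/eq_map => a /=.
  by rewrite !ffunE fg.
split=> //; apply: (inj_map (recolumn_inj fg)).
by rewrite Ew -rep_tuple_reindex -?Et.
Qed.
End Columns.

(* [push v s] repeats the j-th entry of s exactly v_j times:
   push [:: 2; 1] [:: 3; 7] = [:: 3; 3; 7]. For s strictly increasing and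
   y = (v_j at position s_j, 0 elsewhere) this is nu(y). *)
Fixpoint push (v s : seq nat) : seq nat :=
  if (v, s) is (b :: v', a :: s') then nseq b a ++ push v' s' else [::].

Lemma mem_push v s x : x \in push v s -> x \in s.
Proof.
elim: v s => [|b v IH] [|a s] //=; rewrite mem_cat inE => /orP[/nseqP[-> _]|/IH ->];
  by rewrite ?eqxx ?orbT.
Qed.

Lemma mem_push_pos v s x : all (fun x => 0 < x) v -> size s = size v ->
  x \in s -> x \in push v s.
Proof.
elim: v s => [|b v IH] [|a s] //= /andP[b0 pv] [Es].
by rewrite inE mem_cat => /orP[/eqP->|/IH->] //; rewrite ?orbT // mem_nseq b0 eqxx.
Qed.

Lemma size_push v s : size s = size v -> size (push v s) = sumn v.
Proof. by elim: v s => [|b v IH] [|a s] //= [/IH]; rewrite size_cat size_nseq => ->. Qed.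

Lemma map_push h v s : map h (push v s) = push v (map h s).
Proof. by elim: v s => [|b v IH] [|a s] //=; rewrite map_cat map_nseq IH. Qed.

Lemma count_push v s x : uniq s -> size s = size v ->
  count_mem x (push v s) = nth 0 v (index x s).
Proof.
elim: v s => [|b v IH] [|a s] //= /andP[aS us] [Es].
rewrite count_cat IH // count_nseq /=.
case: (eqVneq a x) => [<-|ne] /=; last lia.
by rewrite (memNindex aS) Es nth_default //=; lia.
Qed.

Lemma sorted_push v s : sorted leq s -> sorted leq (push v s).
Proof.
rewrite !(sorted_pairwise leq_trans).
elim: v s => [|b v IH] [|a s] //= /andP[al ps].
rewrite pairwise_cat IH // andbT; apply/andP; split.
  by apply/allrelP => x y /nseqP[-> _] /mem_push ys; exact: (allP al).
by elim: b => //= b ->; rewrite andbT; apply/allP => z /nseqP[-> _].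
Qed.

Lemma push_sorted_inv v s : all (fun x => 0 < x) v -> size s = size v ->
  sorted leq (push v s) -> sorted leq s.
Proof.
rewrite !(sorted_pairwise leq_trans).
elim: v s => [|b v IH] [|a s] //= /andP[b0 pv] [Es].
rewrite pairwise_cat => /and3P[ar _ pp]; rewrite IH // andbT.
apply/allP => x xs; move/allrelP: ar; apply; last exact: mem_push_pos.
by rewrite mem_nseq b0 eqxx.
Qed.

Lemma sorted_ltn_consecutive (s : seq nat) : sorted leq s ->
  (forall j, j.+1 < size s -> nth 0 s j != nth 0 s j.+1) -> sorted ltn s.
Proof.
elim: s => [|a s IH] //=; case: s IH => [|b s] IH //= /andP[ab ps] cd.
rewrite ltn_neqAle ab (cd 0) //=; apply: (IH ps) => j; exact: (cd j.+1).
Qed.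

(* Strict increase of a tuple, split into a property of its set of
   consecutive pairs, which an automaton can check letterwise. *)
Definition consecutive_distinct n (s : n.-tuple nat) : bool :=
  [forall j : 'I_n, forall j' : 'I_n, (val j' == (val j).+1) ==> (tnth s j != tnth s j')].

Lemma sorted_ltnE n (s : n.-tuple nat) :
  sorted ltn s = sorted leq s && consecutive_distinct s.
Proof.
apply/idP/andP => [ss|[sl /forallP cd]].
  split; first by apply: sub_sorted ss => a b /ltnW.
  apply/forallP => j; apply/forallP => j'; apply/implyP => /eqP Ej.
  rewrite !(tnth_nth 0) neq_ltn; apply/orP; left.
  by apply: (sorted_ltn_nth ltn_trans 0 ss); rewrite ?inE ?size_tuple ?ltn_ord ?Ej.
apply: sorted_ltn_consecutive sl _ => j; rewrite size_tuple => jn.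
have jn' : j < n by lia.
by have /forallP/(_ (Ordinal jn)) := cd (Ordinal jn'); rewrite eqxx !(tnth_nth 0).
Qed.

Definition multiplicities (y : nat -> nat) (t : seq nat) : Prop :=
  forall j, y j = count_mem j t.

Lemma mem_le_sumn (t : seq nat) x : x \in t -> x <= sumn t.
Proof. by elim: t => //= a t IH; rewrite inE => /orP[/eqP->|/IH]; lia. Qed.

(* Entries of t are at most sum t, so its multiplicity function vanishes above. *)
Lemma multiplicities_supp y t : multiplicities y t -> supp_below y (sumn t).+1.
Proof. by move=> Hy j Hj; rewrite Hy; apply/count_memPn/negP => /mem_le_sumn; lia. Qed.

Lemma sum_count_mem N (t : seq nat) :
  \sum_(n < N) count_mem (n : nat) t = count (fun x => x < N) t.
Proof.
elim: N => [|N IH]; first by rewrite big_ord0 count_pred0.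
rewrite big_ord_recr /= IH {IH}.
elim: t => //= x t <-; rewrite ltnS leq_eqVlt orbC eq_sym.
by case: (ltngtP x N) => /= H; try lia; rewrite H eqxx /=; lia.
Qed.

Lemma sum_le_multiplicities y t k : multiplicities y t ->
  (sum_le y k <-> size t <= k).
Proof.
move=> Hy; have sumE N : supp_below y N -> \sum_(n < N) y n = size t.
  move=> supp; rewrite (eq_bigr (fun n : 'I_N => count_mem (n : nat) t)) => [|n _]; last exact: Hy.
  rewrite sum_count_mem; apply/eqP; rewrite -all_count; apply/allP => x xt.
  by rewrite ltnNge; apply/negP => /supp; rewrite Hy => /count_memPn; rewrite xt.
split => [[N [/sumE <-]] //|le].
have supp := multiplicities_supp Hy.
by exists (sumn t).+1; rewrite sumE.
Qed.

Lemma profile_decomp y N : supp_below y N ->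
  [/\ all (fun x => 0 < x) (e_of y N), size (s_of y N) = size (e_of y N),
      sorted ltn (s_of y N) & multiplicities y (push (e_of y N) (s_of y N))].
Proof.
move=> supp.
have ss : sorted ltn (s_of y N).
  by apply: sorted_filter; [exact: ltn_trans | exact: iota_ltn_sorted].
have Esz : size (s_of y N) = size (e_of y N) by rewrite /e_of /s_of size_map.
split => //.
- by apply/allP => x /mapP [n]; rewrite mem_filter lt0n => /andP[n0 _] ->.
- move=> j; rewrite count_push //; last exact: (sorted_uniq ltn_trans ltnn).
  case js: (j \in s_of y N).
    by rewrite /e_of -/(s_of y N) (nth_map 0) ?index_mem // nth_index.
  rewrite nth_default; last by rewrite -Esz memNindex ?js.
  move: js; rewrite /s_of mem_filter mem_iota /= add0n.
  by case: (leqP N j) => [/supp -> //|jN]; rewrite andbT => /negbFE/eqP.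
Qed.

Lemma profile_unique y v s : all (fun x => 0 < x) v -> size s = size v ->
  sorted ltn s -> multiplicities y (push v s) ->
  exists N, [/\ supp_below y N, e_of y N = v & s_of y N = s].
Proof.
move=> pv Es ss Hy.
have us : uniq s := sorted_uniq ltn_trans ltnn ss.
have yE n : y n = nth 0 v (index n s) by rewrite Hy count_push.
have y_neq0 n : (y n != 0) = (n \in s).
  rewrite yE; case ns: (n \in s).
    by rewrite -lt0n; apply: (allP pv); apply: mem_nth; rewrite -Es index_mem.
  by rewrite nth_default ?eqxx // -Es memNindex ?ns.
have sE : s_of y (sumn s).+1 = s.
  rewrite /s_of (eq_filter y_neq0); apply: (irr_sorted_eq ltn_trans ltnn) => //.
    by apply: sorted_filter; [exact: ltn_trans | exact: iota_ltn_sorted].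
  move=> x; rewrite mem_filter mem_iota /= add0n andbC ltnS.
  by case xs: (x \in s); rewrite ?andbT ?andbF // mem_le_sumn.
exists (sumn s).+1; split => //.
- move=> j Hj; rewrite yE nth_default // -Es memNindex //.
  by apply/negP => /mem_le_sumn; lia.
- rewrite /e_of -/(s_of y _) sE.
  apply: (@eq_from_nth _ 0); first by rewrite size_map.
  by move=> j; rewrite size_map => Hj; rewrite (nth_map 0) // yE index_uniq.
Qed.

Lemma surj_section (A B : finType) (f : A -> B) :
  (forall b, exists a, f a = b) -> exists g : B -> A, cancel g f.
Proof.
move=> f_surj; have fP b : exists a, f a == b by have [a <-] := f_surj b; exists a.
by exists (fun b => xchoose (fP b)) => b; apply/eqP/(xchooseP (fP b)).
Qed.

Definition block_index (v : seq nat) : seq nat := push v (iota 0 (size v)).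

Lemma size_block_index v : size (block_index v) = sumn v.
Proof. by rewrite size_push // size_iota. Qed.

Lemma block_index_lt v i (Ei : sumn v = i) (k : 'I_i) : nth 0 (block_index v) k < size v.
Proof.
have : nth 0 (block_index v) k \in block_index v by rewrite mem_nth // size_block_index Ei.
by move/mem_push; rewrite mem_iota.
Qed.

Definition block_of v i (Ei : sumn v = i) (k : 'I_i) : 'I_(size v) :=
  Ordinal (block_index_lt Ei k).

Lemma block_of_surj v i (Ei : sumn v = i) : all (fun x => 0 < x) v ->
  forall j, exists k, block_of Ei k = j.
Proof.
move=> pv j; have jv : (j : nat) \in block_index v.
  by apply: mem_push_pos; rewrite ?size_iota // mem_iota /=.
have Hk : index (j : nat) (block_index v) < i by rewrite -Ei -size_block_index index_mem.
by exists (Ordinal Hk); apply: val_inj; rewrite /= nth_index.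
Qed.

Lemma val_reindex_block v i (Ei : sumn v = i) (s : (size v).-tuple nat) :
  val (reindex s (block_of Ei)) = push v s.
Proof.
rewrite /reindex /= -[in RHS](mkseq_nth 0 s) size_tuple /mkseq -map_push.
rewrite -/(block_index v) -[in RHS](mkseq_nth 0 (block_index v)) /mkseq.
rewrite size_block_index Ei -map_comp -val_enum_ord -map_comp.
by apply: eq_map => k /=; rewrite (tnth_nth 0).
Qed.

Fixpoint bounded_seqs n b : seq (seq nat) :=
  if n is n'.+1 then [seq x :: s | x <- iota 0 b, s <- bounded_seqs n' b] else [:: [::]].

Lemma mem_bounded_seqs n b v : size v = n -> all (fun x => x < b) v ->
  v \in bounded_seqs n b.
Proof.
elim: n v => [|n IH] [|x v] //= [Ev] /andP[xb vb].
by apply: allpairs_f; [rewrite mem_iota | exact: IH].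
Qed.

Definition compositions i : seq (seq nat) :=
  [seq v <- flatten [seq bounded_seqs n i.+1 | n <- iota 0 i.+1]
     | all (fun x => 0 < x) v && (sumn v == i)].

Lemma mem_compositions i v :
  (v \in compositions i) = all (fun x => 0 < x) v && (sumn v == i).
Proof.
rewrite mem_filter; apply/andP/idP => [[]//|comp_v]; split=> //.
move/andP: comp_v => [pv /eqP Ev]; apply/flatten_mapP.
exists (size v); last first.
  by apply: mem_bounded_seqs => //; apply/allP => x /mem_le_sumn; rewrite Ev ltnS.
rewrite mem_iota /= add0n ltnS -Ev.
by elim: v pv {Ev} => //= a v IH /andP[a0 /IH]; lia.
Qed.

(* A sorted sequence is determined by its multiplicity function, so it is
   push e(y) s(y) for the profile of its multiplicity function y. *)
Lemma sorted_push_profile y t : sorted leq t -> multiplicities y t ->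
  t = push (e_of y (sumn t).+1) (s_of y (sumn t).+1).
Proof.
move=> st Hy; have [_ Esz ss Hy'] := profile_decomp (multiplicities_supp Hy).
apply: (sorted_eq leq_trans anti_leq) => //.
  by apply: sorted_push; apply: sub_sorted ss => a b /ltnW.
by apply/allP => x _ /=; rewrite -Hy -Hy'.
Qed.

Definition nu_set (Y : (nat -> nat) -> Prop) (k i : nat) (t : i.-tuple nat) : Prop :=
  exists y, Y y /\ sum_le y k /\ is_nu y t.
Arguments nu_set : clear implicits.

Lemma P_vE (Y : (nat -> nat) -> Prop) v (s : (size v).-tuple nat) :
  all (fun x => 0 < x) v ->
  @P_v v Y s <->
  (exists y, Y y /\ sum_le y (sumn v) /\ multiplicities y (push v s)) /\ sorted ltn s.
Proof.
move=> pv; split.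
- move=> [y [N [Yy [supp [ev sv]]]]].
  have [_ Esz ss Hy] := profile_decomp supp; rewrite ev sv in Esz ss Hy.
  split=> //; exists y; split=> //; split=> //.
  by apply/(sum_le_multiplicities _ Hy); rewrite size_push ?size_tuple.
- move=> [[y [Yy [_ Hy]]] ss].
  by have [N [supp ev sv]] := profile_unique pv (size_tuple s) ss Hy; exists y, N.
Qed.

Section Directions.
Variables (Sigma : finType) (S : ANS Sigma) (Y : (nat -> nat) -> Prop).

(* Weak codability gives every P_v: rep(P_v(Y)) is the inverse image of
   rep(nu_set Y i i) (i = sum v) under the column duplication [block_of],
   intersected with the regular condition that consecutive columns differ
   somewhere, which expresses that s is increasing. *)
Lemma P_v_recognizable v : weakly_codable S Y -> all (fun x => 0 < x) v ->
  recognizable S (@P_v v Y).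
Proof.
move=> codable pv; set i := sumn v; pose f := block_of (erefl i).
have f_surj := block_of_surj (erefl i) pv; have [g fg] := surj_section f_surj.
pose Q (A : {set {ffun 'I_(size v) -> option Sigma}}) :=
  [forall j, forall j' : 'I_(size v), (val j' == (val j).+1) ==> [exists a in A, a j != a j']].
have QE s : Q [set a | a \in rep_tuple S s] = consecutive_distinct s.
  apply: eq_forallb => j; apply: eq_forallb => j'; congr (_ ==> _).
  apply/existsP/(entries_neqP S) => [[a /andP[]]|[a ain ne]]; last by exists a; rewrite inE ain.
  by rewrite inE => ain ne; exists a.
apply: regular_ext (regular_inter (regular_preim (recolumn f) (codable i i))
  (regular_letter_set Q)) => w; split.
- move=> [[t [[y [Yy [sle [st Hy]]]] Ew]] Qw].
  have [s [ws Et]] := rep_tuple_recolumn_inv fg Ew; subst w.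
  have Evt : val t = push v s by rewrite Et val_reindex_block.
  rewrite Evt in st Hy; exists s; split=> //; apply/P_vE => //; split.
    by exists y.
  by rewrite sorted_ltnE -QE Qw andbT; apply: push_sorted_inv pv (size_tuple s) st.
- move=> [s [/(P_vE Y s pv) [[y [Yy [sle Hy]]] ss] ->]].
  move: (ss); rewrite sorted_ltnE => /andP[sl cd]; split; last by rewrite QE.
  exists (reindex s f); split; last by rewrite rep_tuple_reindex.
  exists y; split=> //; split=> //; rewrite /is_nu val_reindex_block.
  by split=> //; apply: sorted_push.
Qed.

(* Conversely, rep(nu_set Y k i) is empty for i > k, and otherwise it is the
   finite union over the compositions v of i of the images of rep(P_v(Y))
   under the injective column duplications [block_of]. *)
Lemma nu_set_recognizable k i :
  (forall v, all (fun x => 0 < x) v -> recognizable S (@P_v v Y)) ->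
  recognizable S (nu_set Y k i).
Proof.
move=> P_v_rec; have [ik|ki] := leqP i k; last first.
  apply: regular_ext (regular_empty _) => w; split=> // -[t [[y [_ [sle [_ Hy]]]] _]].
  by move: sle; rewrite (sum_le_multiplicities _ Hy) size_tuple leqNgt ki.
pose L v (w : seq {ffun 'I_i -> option Sigma}) := exists Ei : sumn v = i,
  exists u, (exists s, @P_v v Y s /\ u = rep_tuple S s) /\
            w = map (recolumn (block_of Ei)) u.
have L_regular v : v \in compositions i -> regular (L v).
  rewrite mem_compositions => /andP[pv /eqP Ei].
  have [g fg] := surj_section (block_of_surj Ei pv).
  apply: regular_ext (regular_image (recolumn_inj fg) (P_v_rec v pv)) => w.
  split=> [[u [Pu ->]]|[Ei' [u [Pu ->]]]]; first by exists Ei, u.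
  by exists u; rewrite (eq_irrelevance Ei' Ei).
apply: regular_ext (regular_bigunion L_regular) => w; split.
- move=> [v []]; rewrite mem_compositions => /andP[pv _].
  move=> [Ei [_ [[s [/(P_vE Y s pv) [[y [Yy [sle Hy]]] ss] ->]] ->]]].
  exists (reindex s (block_of Ei)); split.
    exists y; split=> //; rewrite /is_nu val_reindex_block; split.
      by case: sle => N [supp le]; exists N; split=> //; rewrite (leq_trans le) // Ei.
    by split=> //; apply: sorted_push; apply: sub_sorted ss => a b /ltnW.
  by rewrite rep_tuple_reindex //; exact: block_of_surj.
- move=> [t [[y [Yy [_ [st Hy]]]] ->]].
  have Et := sorted_push_profile st Hy; set N := (sumn t).+1 in Et.
  have [pv Esz _ _] := profile_decomp (multiplicities_supp Hy).
  set v := e_of y N in Et pv Esz; set s := s_of y N in Et Esz.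
  have Ei : sumn v = i by rewrite -(size_tuple t) Et size_push.
  pose sT : (size v).-tuple nat := Tuple (introT eqP Esz).
  exists v; split; first by rewrite mem_compositions pv Ei eqxx.
  exists Ei, (rep_tuple S sT); split.
    exists sT; split=> //; exists y, N.
    by do !split=> //; exact: multiplicities_supp Hy.
  have -> : t = reindex sT (block_of Ei) by apply: val_inj; rewrite val_reindex_block.
  by apply: rep_tuple_reindex; exact: block_of_surj.
Qed.
End Directions.

Theorem mainTheorem5 (Sigma : finType) (S : ANS Sigma) (Y : (nat -> nat) -> Prop) :
  weakly_codable S Y <->
  (forall v : seq nat, all (fun x => 0 < x) v -> recognizable S (@P_v v Y)).
Proof.
split=> [codable v pv | P_v_rec k i]; first exact: P_v_recognizable.
exact: nu_set_recognizable.
Qed.
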